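(* The abelianization of an SB-generated group is finitely generated.
   Context: A subset of a group $G$ is strongly bounded if it has finite diameter in every left-invariant metric on $G$; a group is SB-generated if it is generated by a strongly bounded subset. *)

From Stdlib Require Import Reals List.
Open Scope R_scope.

Record group := Group {
  carrier :> Type;
  gmul : carrier -> carrier -> carrier;
  ginv : carrier -> carrier;
  gone : carrier;
  gmulA : forall x y z, gmul x (gmul y z) = gmul (gmul x y) z;
  gmul1 : forall x, gmul gone x = x;
  gmulV : forall x, gmul (ginv x) x = gone
}.

Arguments gmul {g}.
Arguments ginv {g}.
Arguments gone {g}.

Inductive gen (G : group) (A : G -> Prop) : G -> Prop :=
| gen_base : forall x, A x -> gen G A x
| gen_one : gen G A gone
| gen_mul : forall x y, gen G A x -> gen G A y -> gen G A (gmul x y)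
| gen_inv : forall x, gen G A x -> gen G A (ginv x).

Definition left_invariant_metric (G : group) (d : G -> G -> R) : Prop :=
  (forall x y, 0 <= d x y) /\
  (forall x y, d x y = 0 <-> x = y) /\
  (forall x y, d x y = d y x) /\
  (forall x y z, d x z <= d x y + d y z) /\
  (forall g x y, d (gmul g x) (gmul g y) = d x y).

Definition strongly_bounded (G : group) (A : G -> Prop) : Prop :=
  forall d : G -> G -> R, left_invariant_metric G d ->
    exists M : R, forall x y, A x -> A y -> d x y <= M.

Definition SB_generated (G : group) : Prop :=
  exists A : G -> Prop, strongly_bounded G A /\ forall g : G, gen G A g.

Definition commutator {G : group} (x y : G) : G :=
  gmul (gmul (ginv x) (ginv y)) (gmul x y).

Definition commutator_subgroup (G : group) : G -> Prop :=
  gen G (fun z => exists x y : G, z = commutator x y).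

(* G/[G,G] is finitely generated: finitely many cosets s_i [G,G] generate the
   quotient, i.e. every g is congruent mod [G,G] to an element of <s>. *)
Definition abelianization_finitely_generated (G : group) : Prop :=
  exists s : list G, forall g : G,
    exists h : G, gen G (fun x => In x s) h /\
                  commutator_subgroup G (gmul (ginv h) g).

From Stdlib Require Import Reals List Lra.
From HB Require Import structures.
From mathcomp Require Import all_boot ssralg ssrint intdiv zify.
From mathcomp Require Import boolp classical_sets.

(* If H = G/[G,G] is not finitely generated, it is the union
   of an increasing sequence S_0 <= S_1 <= ... of proper subgroups.  Then
   len g := min {n | g[G,G] in S_n} is symmetric and satisfies
   len (g h) <= max (len g) (len h), so d(x, y) := 1 + len (x^-1 y) (x <> y) is
   a left-invariant metric on G.  A d-bounded set A containing a0 lies in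
   a0 (preimage of S_N) for some N, and so does the subgroup it generates,
   which therefore is not G.

   To build (S_n) relative to a subgroup F, choose elements w_n and integers
   c_n dividing c_(n+1) such that c_n w_n lies outside F + W_n, where
   W_n = <w_0, ..., w_(n-1)>.  By Zorn's lemma some subgroup K containing F is
   maximal with c_n w_n outside K + W_n for all n; put S_n := {x | c_n x in
   K + W_n}.  If no multiple M H lies in a finitely generated subgroup, c_n = n!
   works.  Otherwise, splitting off one prime factor of M at a time reduces to
   the case p H <= F with p prime, where c_n = 1 works because a multiple a x
   with p not dividing a already determines x modulo p H. *)

Set Implicit Arguments.
Unset Strict Implicit.
Unset Printing Implicit Defensive.

Import GRing.Theory.
Local Open Scope classical_set_scope.

Arguments gen_base {G A x}.
Arguments gen_one {G A}.
Arguments gen_mul {G A x y}.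
Arguments gen_inv {G A x}.

Lemma Zorn_bigcup_above (T : Type) (P : set (set T)) (F : set T) :
  P F ->
  (forall C, C `<=` P -> total_on C subset -> C !=set0 -> P (\bigcup_(X in C) X)) ->
  exists A, [/\ F `<=` A, P A & forall B, A `<` B -> ~ P B].
Proof.
move=> PF chainP.
(* Working with F `|` A makes the empty chain harmless. *)
have [A [PFA maxA]] : exists A, P (F `|` A) /\ forall B, A `<` B -> ~ P (F `|` B).
  apply: Zorn_bigcup => C CP totC.
  pose C' := [set F] `|` [set F `|` X | X in C].
  have -> : F `|` \bigcup_(X in C) X = \bigcup_(X in C') X.
    apply/seteqP; split=> [x [Fx|[X CX Xx]]|x [Y [->|[X CX <-]] Yx]].
    - by exists F => //; left.
    - by exists (F `|` X); [right; exists X|right].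
    - by left.
    - by case: Yx => [Fx|Xx]; [left|right; exists X].
  apply: chainP; last by exists F; left.
  - by move=> _ [->|[X /CP PFX <-]].
  - move=> _ _ [->|[X CX <-]] [->|[Y CY <-]].
    + by left.
    + by left; apply: subsetUl.
    + by right; apply: subsetUl.
    + by have [XY|YX] := totC X Y CX CY; [left|right]; apply: setUS.
exists (F `|` A); split=> [|//|B [FAB BFA] PB]; first exact: subsetUl.
apply: (maxA B); last by rewrite setUidr // => x Fx; apply: FAB; left.
split=> [x Ax|BA]; first by apply: FAB; right.
by apply: BFA => x Bx; right; apply: BA.
Qed.

Lemma subset_homo_leq (T : Type) (A : nat -> set T) :
  (forall n, A n `<=` A n.+1) -> {homo A : m n / (m <= n)%N >-> m `<=` n}.
Proof. by apply: homo_leq => [B|B B' B'']; [exact: subset_refl|exact: subset_trans]. Qed.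

Lemma recursive_choice (T : Type) (P : nat -> seq T -> T -> Prop) :
  (forall n s, exists x, P n s x) ->
  exists (w : nat -> T) (ws : nat -> seq T), forall n, ws n.+1 = w n :: ws n /\ P n (ws n) (w n).
Proof.
move=> exP; pose next n s := projT1 (cid (exP n s)).
pose fix ws n := if n is m.+1 then next m (ws m) :: ws m else [::].
by exists (fun n => next n (ws n)), ws => n; split=> //; apply: (projT2 (cid _)).
Qed.

Section AdditiveSubgroups.
Variable V : zmodType.
Implicit Types (A B F K S : set V) (x y : V).
Local Open Scope ring_scope.

Definition zsubgroup S := S 0 /\ forall x y, S x -> S y -> S (x - y).

Section ZsubgroupClosure.
Variables (S : set V) (zsubS : zsubgroup S).

Lemma zsubgroup0 : S 0. Proof. by case: zsubS. Qed.

Lemma zsubgroupB x y : S x -> S y -> S (x - y). Proof. by case: zsubS => _; apply. Qed.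

Lemma zsubgroupN x : S x -> S (- x).
Proof. by move=> Sx; rewrite -sub0r; apply: zsubgroupB => //; apply: zsubgroup0. Qed.

Lemma zsubgroupD x y : S x -> S y -> S (x + y).
Proof. by move=> Sx Sy; rewrite -[y]opprK; apply/zsubgroupB/zsubgroupN. Qed.

Lemma zsubgroupMn x n : S x -> S (x *+ n).
Proof.
move=> Sx; elim: n => [|n IHn]; first by rewrite mulr0n; apply: zsubgroup0.
by rewrite mulrS; apply: zsubgroupD.
Qed.

Lemma zsubgroupMz x a : S x -> S (x *~ a).
Proof.
by move=> Sx; case: a => n; [|rewrite NegzE mulrNz; apply: zsubgroupN]; apply: zsubgroupMn.
Qed.

End ZsubgroupClosure.

Lemma zsubgroup_set0 : zsubgroup [set 0].
Proof. by split=> // x y -> ->; rewrite subr0. Qed.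

Lemma bigcup_chain_zsubgroup (C : set (set V)) :
  C `<=` zsubgroup -> total_on C subset -> C !=set0 -> zsubgroup (\bigcup_(K in C) K).
Proof.
move=> Csub totC [K0 CK0]; split; first by exists K0 => //; exact: zsubgroup0 (Csub _ CK0).
move=> x y [X CX Xx] [Y CY Yy].
have [XY|YX] := totC X Y CX CY.
- by exists Y => //; apply: (zsubgroupB (Csub _ CY)) => //; apply: XY.
- by exists X => //; apply: (zsubgroupB (Csub _ CX)) => //; apply: YX.
Qed.

Definition addset A B : set V := [set a + b | a in A & b in B].

Lemma mem_addset A B x y : A x -> B y -> addset A B (x + y).
Proof. by move=> Ax By; exists x => //; exists y. Qed.

Lemma addset_zsubgroup A B : zsubgroup A -> zsubgroup B -> zsubgroup (addset A B).
Proof.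
move=> zsubA zsubB; split; first by rewrite -[0]addr0; apply: mem_addset; apply: zsubgroup0.
move=> _ _ [a Aa [b Bb <-]] [a' Aa' [b' Bb' <-]].
by rewrite opprD addrACA; apply: mem_addset; apply: zsubgroupB.
Qed.

Lemma addsetl A B : zsubgroup B -> A `<=` addset A B.
Proof. by move=> zsubB x Ax; rewrite -[x]addr0; apply: mem_addset (zsubgroup0 zsubB). Qed.

Lemma addsetr A B : zsubgroup A -> B `<=` addset A B.
Proof. by move=> zsubA x Bx; rewrite -[x]add0r; apply: mem_addset (zsubgroup0 zsubA) _. Qed.

Lemma addsetS A A' B B' : A `<=` A' -> B `<=` B' -> addset A B `<=` addset A' B'.
Proof. by move=> AA' BB' _ [a Aa [b Bb <-]]; apply: mem_addset; [apply: AA'|apply: BB']. Qed.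

Definition multiples x : set V := range (fun a : int => x *~ a).

Lemma multiples_zsubgroup x : zsubgroup (multiples x).
Proof.
split; first by exists 0.
by move=> _ _ [a _ <-] [b _ <-]; exists (a - b) => //; rewrite mulrzBr.
Qed.

Lemma multiples_id x : multiples x x. Proof. by exists 1. Qed.

Lemma mulrn_image_zsubgroup S n : zsubgroup S -> zsubgroup [set x *+ n | x in S].
Proof.
move=> zsubS; split; first by exists 0; [apply: zsubgroup0|rewrite mul0rn].
by move=> _ _ [x Sx <-] [y Sy <-]; exists (x - y); [apply: zsubgroupB|rewrite mulrnBl].
Qed.

Inductive span A : set V :=
  | span_base x : A x -> span A x
  | span0 : span A 0
  | spanB x y : span A x -> span A y -> span A (x - y).

Lemma span_zsubgroup A : zsubgroup (span A).
Proof. by split; [apply: span0|apply: spanB]. Qed.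

Lemma span_min A S : zsubgroup S -> A `<=` S -> span A `<=` S.
Proof.
move=> zsubS AS x; elim=> [y /AS //||y z _ Sy _ Sz]; first exact: zsubgroup0.
exact: zsubgroupB.
Qed.

Lemma spanS A B : A `<=` B -> span A `<=` span B.
Proof. by move=> AB; apply: span_min (span_zsubgroup B) _ => x /AB /span_base. Qed.

Definition spanl (s : seq V) := span [set x | In x s].

Definition fg_over F S := exists s, S `<=` addset F (spanl s).

Lemma fg_over_trans F K S : fg_over K S -> fg_over F K -> fg_over F S.
Proof.
move=> [s1 SK] [s2 KF]; exists (s2 ++ s1) => x /SK [_ /KF [f Ff [v v2 <-]] [u u1 <-]].
rewrite -addrA; apply: mem_addset => //; apply: (zsubgroupD (span_zsubgroup _)).
- by apply: spanS v2 => y s2y; apply: in_or_app; left.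
- by apply: spanS u1 => y s1y; apply: in_or_app; right.
Qed.

End AdditiveSubgroups.

Section Exhaustions.
Variable V : zmodType.
Implicit Types (F K L S : set V) (x y : V).
Local Open Scope ring_scope.

Record proper_exhaustion S F (T : nat -> set V) : Prop := ProperExhaustion {
  exhaustion_zsubgroup : forall n, zsubgroup (T n);
  exhaustion_above : forall n, F `<=` T n;
  exhaustion_incr : forall n, T n `<=` T n.+1;
  exhaustion_cover : forall x, S x -> exists n, T n x;
  exhaustion_proper : forall n, exists2 x, S x & ~ T n x }.

Lemma proper_exhaustionW S F F' T :
  F' `<=` F -> proper_exhaustion S F T -> proper_exhaustion S F' T.
Proof. by move=> F'F [? FT *]; split=> // n; apply: subset_trans (FT n). Qed.

Section MaximalAvoidance.
Variables (S F : set V) (w : nat -> V) (ws : nat -> seq V) (c : nat -> nat).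
Hypotheses (zsubF : zsubgroup F) (ws_cons : forall n, ws n.+1 = w n :: ws n).
Hypothesis c_dvd : forall n, (c n %| c n.+1)%N.
Hypothesis w_avoids_F : forall n, ~ addset F (spanl (ws n)) (w n *+ c n).

Local Notation W n := (spanl (ws n)).

Let W_incr n : W n `<=` W n.+1.
Proof. by apply: spanS => x wsx; rewrite ws_cons; right. Qed.

Let w_in_W n : W n.+1 (w n).
Proof. by apply: span_base; rewrite /= ws_cons; left. Qed.

Definition avoiding K := zsubgroup K /\ forall n, ~ addset K (W n) (w n *+ c n).

Lemma exists_maximal_avoiding :
  exists K, [/\ F `<=` K, avoiding K & forall K', K `<` K' -> ~ avoiding K'].
Proof.
apply: Zorn_bigcup_above => [|C Cavoid totC C0]; first by split.
split; first by apply: bigcup_chain_zsubgroup => // K /Cavoid [].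
move=> n [k [K CK Kk] [u Wu e]]; have [_ /(_ n)] := Cavoid K CK.
by apply; rewrite -e; apply: mem_addset.
Qed.

Lemma maximal_avoiding_multiple K x :
  avoiding K -> (forall K', K `<` K' -> ~ avoiding K') -> ~ K x ->
  exists a n, ~ K (x *~ a) /\ addset K (spanl (ws n.+1)) (x *~ a).
Proof.
move=> [zsubK Kavoid] Kmax Kx; pose K' := addset K (multiples x).
have zsubK' : zsubgroup K' by apply/addset_zsubgroup/multiples_zsubgroup.
have KK' : K `<` K'.
  split; first exact/addsetl/multiples_zsubgroup.
  by move=> /(_ x (addsetr zsubK (multiples_id x))).
have /existsNP [n /contrapT [_ [k Kk [_ [a _ <-] <-]] [u Wu e]]] :
  ~ forall n, ~ addset K' (W n) (w n *+ c n) by move=> K'avoid; apply: (Kmax K').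
exists a, n; split.
  move=> Kxa; apply: (Kavoid n _); rewrite -e; apply: mem_addset => //.
  exact: zsubgroupD.
have -> : x *~ a = - k + (w n *+ c n - u) by rewrite -e addrK addKr.
apply: mem_addset; first exact: zsubgroupN.
apply: (zsubgroupB (span_zsubgroup _)); last exact: W_incr.
by apply: zsubgroupMn; [apply: span_zsubgroup|apply: w_in_W].
Qed.

Hypothesis w_in_S : forall n, S (w n).
Hypothesis multiple_cover : forall K x a n,
  zsubgroup K -> F `<=` K -> S x -> ~ K (x *~ a) -> addset K (spanl (ws n.+1)) (x *~ a) ->
  exists m, addset K (spanl (ws n.+1)) (x *+ c m).

Lemma avoidance_exhaustion : exists T, proper_exhaustion S F T.
Proof.
have [K [FK [zsubK Kavoid] Kmax]] := exists_maximal_avoiding.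
have zsubKW n : zsubgroup (addset K (W n)) by apply/addset_zsubgroup/span_zsubgroup.
have W_mono : {homo (fun n => W n) : m n / (m <= n)%N >-> m `<=` n}.
  exact: subset_homo_leq W_incr.
have KW_mono m n : (m <= n)%N -> addset K (W m) `<=` addset K (W n).
  by move=> mn; apply: addsetS => //; apply: W_mono.
have c_mono : {homo c : m n / (m <= n)%N >-> (m %| n)%N}.
  by apply: homo_leq c_dvd => [//|k m n]; apply: dvdn_trans.
have KW_multiple k m n x : (k <= n)%N -> (m <= n)%N ->
    addset K (W k) (x *+ c m) -> addset K (W n) (x *+ c n).
  move=> kn mn KWx; have /dvdnP [q ->] := c_mono m n mn.
  by rewrite mulnC mulrnA; apply: zsubgroupMn => //; apply: KW_mono kn _ KWx.
exists (fun n => [set x | addset K (W n) (x *+ c n)]); split.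
- move=> n; split=> [|x y KWx KWy] /=; first by rewrite mul0rn; apply: zsubgroup0.
  by rewrite mulrnBl; apply: zsubgroupB.
- by move=> n x Fx; apply: addsetl; [apply: span_zsubgroup|apply: FK; apply: zsubgroupMn].
- by move=> n x; apply: KW_multiple; apply: leqnSn.
- move=> x Sx; have [Kx|Kx] := pselect (K x).
    by exists 0%N; apply: addsetl; [apply: span_zsubgroup|apply: zsubgroupMn].
  have [a [n [notKxa KWxa]]] := maximal_avoiding_multiple (conj zsubK Kavoid) Kmax Kx.
  have [m KWxm] := multiple_cover zsubK FK Sx notKxa KWxa.
  by exists (maxn m n.+1); apply: KW_multiple KWxm; rewrite ?leq_maxl ?leq_maxr.
- by move=> n; exists (w n) => //; apply: Kavoid.
Qed.

End MaximalAvoidance.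

Lemma unbounded_exhaustion :
  (forall s M, (0 < M)%N -> exists x, ~ spanl s (x *+ M)) ->
  exists T, proper_exhaustion [set: V] [set 0] T.
Proof.
move=> unbounded.
have [w [ws wsP]] := recursive_choice (fun n s => unbounded s _ (fact_gt0 n)).
apply: (avoidance_exhaustion (w := w) (ws := ws) (c := factorial)) => //.
- exact: zsubgroup_set0.
- by move=> n; case: (wsP n).
- by move=> n; rewrite factS dvdn_mull.
- by move=> n [_ -> [u Wu]]; rewrite add0r => e; apply: (wsP n).2; rewrite -e.
move=> K x a n zsubK _ _ notKxa KWxa; exists (`|a|%N); rewrite pmulrn.
have /dvdzP [b ->] : (a %| ((`|a|)`!)%:Z)%Z.
  rewrite dvdzE absz_nat dvdn_fact // absz_gt0 leqnn andbT; apply/eqP => a0.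
  by apply: notKxa; rewrite a0 mulr0z; apply: zsubgroup0.
by rewrite -mulrzA_C; apply: zsubgroupMz => //; apply/addset_zsubgroup/span_zsubgroup.
Qed.

Lemma prime_exponent_exhaustion p S F :
  prime p -> zsubgroup F -> (forall x, S x -> F (x *+ p)) ->
  ~ fg_over F S -> exists T, proper_exhaustion S F T.
Proof.
move=> p_pr zsubF pSF notfg.
have [w [ws wsP]] : exists w ws, forall n,
    ws n.+1 = w n :: ws n /\ (S (w n) /\ ~ addset F (spanl (ws n)) (w n)).
  apply: (recursive_choice (P := fun _ s x => S x /\ ~ addset F (spanl s) x)) => n s.
  apply: contrapT => nos; apply: notfg; exists s => x Sx.
  by apply: contrapT => notx; apply: nos; exists x.
apply: (avoidance_exhaustion (w := w) (ws := ws) (c := fun=> 1%N)) => //.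
- by move=> n; case: (wsP n).
- by move=> n; rewrite mulr1n; case: (wsP n) => _ [].
- by move=> n; case: (wsP n) => _ [].
move=> K x a n zsubK FK Sx notKxa KWxa; exists 0%N; rewrite mulr1n.
have /coprimezP [[u v] /= uv] : coprimez p a.
  rewrite coprimezE absz_nat prime_coprime //; apply/negP => pa.
  have /dvdzP [b ab] : (p %| a)%Z by rewrite dvdzE absz_nat.
  by apply: notKxa; rewrite ab -mulrzA_C -pmulrn; apply/FK/(zsubgroupMz zsubF)/pSF.
have zsubKW : zsubgroup (addset K (spanl (ws n.+1))) by apply/addset_zsubgroup/span_zsubgroup.
rewrite -[x]mulr1z -uv mulrzDr -!mulrzA_C -pmulrn; apply: zsubgroupD => //.
  by apply: addsetl; [apply: span_zsubgroup|apply/FK/(zsubgroupMz zsubF)/pSF].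
exact: zsubgroupMz.
Qed.

Lemma exhaustion_pullback p S F T :
  zsubgroup F -> proper_exhaustion (addset [set x *+ p | x in S] F) F T ->
  proper_exhaustion S F (fun n => [set x | T n (x *+ p)]).
Proof.
move=> zsubF [zsubT FT T_incr T_cover T_proper]; split.
- move=> n; split=> [|x y Tx Ty] /=; first by rewrite mul0rn; apply: zsubgroup0.
  by rewrite mulrnBl; apply: zsubgroupB.
- by move=> n x Fx; apply: FT; apply: zsubgroupMn.
- by move=> n x; apply: T_incr.
- move=> x Sx; have [|n Tx] := T_cover (x *+ p); last by exists n.
  by apply: addsetl => //; exists x.
move=> n; have [_ [_ [x Sx <-] [f Ff <-]] notT] := T_proper n.
by exists x => // Tx; apply: notT; apply: zsubgroupD => //; apply: FT.
Qed.

Lemma bounded_exponent_exhaustion M S F :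
  (0 < M)%N -> zsubgroup S -> zsubgroup F -> (forall x, S x -> F (x *+ M)) ->
  ~ fg_over F S -> exists T, proper_exhaustion S F T.
Proof.
elim/ltn_ind: M S F => M IH S F M_gt0 zsubS zsubF MSF notfg.
have [M_le1|M_gt1] := leqP M 1.
  have M1 : M = 1%N by apply/eqP; rewrite eqn_leq M_le1.
  exfalso; apply: notfg; exists [::] => x Sx; apply: addsetl; first exact: span_zsubgroup.
  by rewrite -[x]mulr1n -M1; apply: MSF.
pose p := pdiv M; have p_pr : prime p by apply: pdiv_prime.
pose L := addset [set x *+ p | x in S] F.
have zsubpS : zsubgroup [set x *+ p | x in S] by apply: mulrn_image_zsubgroup.
have zsubL : zsubgroup L by apply: addset_zsubgroup.
have [fgLS|notfgLS] := pselect (fg_over L S); last first.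
  have [T chainT] := prime_exponent_exhaustion p_pr zsubL
    (fun x Sx => addsetl zsubF (ex_intro2 _ _ x Sx erefl)) notfgLS.
  by exists T; apply: proper_exhaustionW chainT; apply: addsetr.
have [T chainT] : exists T, proper_exhaustion L F T.
  apply: (IH (M %/ p)%N) => //.
  - by rewrite ltn_Pdiv // prime_gt1.
  - by rewrite divn_gt0 ?prime_gt0 // dvdn_leq // pdiv_dvd.
  - move=> _ [_ [x Sx <-] [f Ff <-]]; rewrite mulrnDl -mulrnA mulnC divnK ?pdiv_dvd //.
    by apply: (zsubgroupD zsubF); [apply: MSF|apply: zsubgroupMn].
  - by move=> fgFL; apply: notfg; apply: fg_over_trans fgLS fgFL.
by exists (fun n => [set x | T n (x *+ p)]); apply: exhaustion_pullback.
Qed.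

Theorem not_fg_exhaustion :
  ~ fg_over [set 0] [set: V] -> exists T, proper_exhaustion [set: V] [set 0] T.
Proof.
move=> notfg.
have [[s [M [M_gt0 MVs]]]|unbounded] :=
  pselect (exists s M, (0 < M)%N /\ forall x, spanl s (x *+ M)).
  have [T chainT] : exists T, proper_exhaustion [set: V] (spanl s) T.
    apply: (bounded_exponent_exhaustion M_gt0) => //; first exact: span_zsubgroup.
    move=> fgV; apply: notfg; apply: (fg_over_trans fgV).
    by exists s => x sx; apply: addsetr => //; apply: zsubgroup_set0.
  by exists T; apply: proper_exhaustionW chainT => _ ->; apply: span0.
apply: unbounded_exhaustion => s M M_gt0; apply: contrapT => allin.
apply: unbounded; exists s, M; split=> // x.
by apply: contrapT => notin; apply: allin; exists x.
Qed.

End Exhaustions.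

Declare Scope grp_scope.
Delimit Scope grp_scope with grp.
Local Notation "x * y" := (gmul x y) : grp_scope.
Local Notation "x ^-1" := (ginv x) : grp_scope.
Local Notation "1" := gone : grp_scope.
Local Open Scope R_scope.
Local Open Scope grp_scope.

Section GroupLaws.
Variable G : group.
Implicit Types x y z : G.

Lemma gmulK x y : x^-1 * (x * y) = y.
Proof. by rewrite gmulA gmulV gmul1. Qed.

Lemma gmulI x y z : x * y = x * z -> y = z.
Proof. by move=> e; rewrite -(gmulK x y) e gmulK. Qed.

Lemma gmul1_r x : x * 1 = x.
Proof. by apply: (@gmulI x^-1); rewrite gmulK gmulV. Qed.

Lemma gmulV_r x : x * x^-1 = 1.
Proof. by apply: (@gmulI x^-1); rewrite gmulK gmul1_r. Qed.

Lemma gmulKV x y : x * (x^-1 * y) = y.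
Proof. by rewrite gmulA gmulV_r gmul1. Qed.

Lemma ginvK x : (x^-1)^-1 = x.
Proof. by apply: (@gmulI x^-1); rewrite gmulV_r gmulV. Qed.

Lemma ginvM x y : (x * y)^-1 = y^-1 * x^-1.
Proof. by apply: (@gmulI (x * y)); rewrite gmulV_r -gmulA gmulKV gmulV_r. Qed.

Definition gsubgroup (S : set G) :=
  [/\ S 1, forall x y, S x -> S y -> S (x * y) & forall x, S x -> S x^-1].

End GroupLaws.

Section LengthMetric.
Variables (G : group) (len : G -> nat).
Implicit Types x y z : G.
Hypotheses (len1 : len 1%grp = 0%N) (lenV : forall x, len x^-1 = len x).
Hypothesis len_mul : forall x y, (len (x * y)%grp <= maxn (len x) (len y))%N.

Definition length_dist x y : R :=
  if `[< x = y >] then 0 else INR (len (x^-1 * y)%grp).+1.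

Lemma length_le_dist x y : INR (len (x^-1 * y)%grp) <= length_dist x y.
Proof.
rewrite /length_dist; case: (asboolP (x = y)) => [xy|_]; last by rewrite S_INR; lra.
by rewrite -xy gmulV len1 /=; lra.
Qed.

Lemma length_dist_ge0 x y : 0 <= length_dist x y.
Proof. by rewrite /length_dist; case: asboolP => _; [lra|apply: pos_INR]. Qed.

Lemma length_dist_metric : left_invariant_metric G length_dist.
Proof.
split; [exact: length_dist_ge0|rewrite /length_dist; split; [|split; [|split]]].
- move=> x y; case: asboolP => // xy; split=> // d0.
  by have := pos_INR (len (x^-1 * y)); rewrite S_INR in d0; lra.
- move=> x y; case: (asboolP (x = y)) => [->|xy]; case: asboolP => // [yx|_].
    by case: xy.
  by rewrite -lenV ginvM ginvK.
- move=> x y z; case: (asboolP (x = z)) => [_|xz].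
    by have := length_dist_ge0 x y; have := length_dist_ge0 y z; rewrite /length_dist; lra.
  case: (asboolP (x = y)) => [xy|nxy]; case: (asboolP (y = z)) => [yz|nyz].
  - by case: xz; rewrite xy yz.
  - by rewrite xy; lra.
  - by rewrite -yz; lra.
  have : ((len (x^-1 * z)%grp).+1 <= (len (x^-1 * y)%grp).+1 + (len (y^-1 * z)%grp).+1)%N.
    by have := len_mul (x^-1 * y) (y^-1 * z); rewrite -gmulA gmulKV; lia.
  by move=> /leP/le_INR; rewrite plus_INR.
- move=> g x y; rewrite ginvM -gmulA gmulK.
  case: (asboolP (x = y)) => [->|xy]; case: asboolP => // gxy.
  by case: xy; apply: gmulI gxy.
Qed.

End LengthMetric.

Section ChainLength.
Variables (G : group) (T : nat -> set G).
Implicit Types x y : G.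
Hypotheses (T_sub : forall n, gsubgroup (T n)) (T_incr : forall n, T n `<=` T n.+1).
Hypothesis T_cover : forall x, exists n, T n x.

Let T_mono := subset_homo_leq T_incr.

Let T_cover_bool x : exists n, `[< T n x >].
Proof. by have [n Tnx] := T_cover x; exists n; apply/asboolP. Qed.

Definition chain_length x := ex_minn (T_cover_bool x).

Lemma chain_length_mem x : T (chain_length x) x.
Proof. by rewrite /chain_length; case: ex_minnP => n /asboolP. Qed.

Lemma chain_length_min x n : T n x -> (chain_length x <= n)%N.
Proof. by rewrite /chain_length; case: ex_minnP => m _ minm /asboolP /minm. Qed.

Lemma chain_length1 : chain_length 1 = 0%N.
Proof. by apply/eqP; rewrite -leqn0; apply: chain_length_min; case: (T_sub 0). Qed.

Lemma chain_lengthV x : chain_length x^-1 = chain_length x.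
Proof.
have TV n y : T n y -> T n y^-1 by case: (T_sub n) => _ _; apply.
apply/eqP; rewrite eqn_leq; apply/andP; split; apply: chain_length_min.
  exact/TV/chain_length_mem.
by rewrite -[x in T _ x]ginvK; apply/TV/chain_length_mem.
Qed.

Lemma chain_lengthM x y :
  (chain_length (x * y)%grp <= maxn (chain_length x) (chain_length y))%N.
Proof.
apply: chain_length_min; case: (T_sub (maxn (chain_length x) (chain_length y))) => _ TM _.
by apply: TM; apply: T_mono (chain_length_mem _); rewrite ?leq_maxl ?leq_maxr.
Qed.

Lemma SB_generated_chain_stationary : SB_generated G -> exists n, forall x, T n x.
Proof.
move=> [A [SBA genA]].
have [M Mbound] := SBA _ (length_dist_metric chain_length1 chain_lengthV chain_lengthM).
suff [N AT] : exists N, A `<=` T N.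
  exists N => x; case: (T_sub N) => T1 TM TV.
  by elim: (genA x) => [a /AT| |y z _ Ty _ Tz|y _ Ty]; auto.
have [[a0 Aa0]|noA] := pselect (exists a, A a); last first.
  by exists 0%N => a Aa; case: noA; exists a.
have [K MK] := INR_archimed 1 M Rlt_0_1; rewrite Rmult_1_r in MK.
exists (maxn (chain_length a0) K) => a Aa; rewrite -(gmulKV a0 a).
case: (T_sub (maxn (chain_length a0) K)) => _ TM _; apply: TM.
  by apply: T_mono (chain_length_mem a0); apply: leq_maxl.
apply: T_mono (chain_length_mem _); apply: leq_trans (leq_maxr _ K); apply: ltnW; apply/ltP/INR_lt.
by have := length_le_dist chain_length1 a0 a; have := Mbound a0 a Aa0 Aa; lra.
Qed.

End ChainLength.

Section Abelianization.
Variable G : group.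
Implicit Types x y z : G.
Local Notation N := (commutator_subgroup G).

Lemma commutator_subgroupJ x y : N x -> N (y^-1 * (x * y)).
Proof.
move=> Nx; have -> : y^-1 * (x * y) = x * commutator x y.
  by rewrite /commutator [RHS]gmulA gmulKV.
by apply: gen_mul Nx _; apply: gen_base; exists x, y.
Qed.

Definition coset x : set G := [set y | N (x^-1 * y)].

Definition abelianization := {P : set G | exists x, P = coset x}.

HB.instance Definition _ := gen_eqMixin abelianization.
HB.instance Definition _ := gen_choiceMixin abelianization.

Definition ab x : abelianization := exist _ (coset x) (ex_intro _ x erefl).

Lemma ab_eqP x y : ab x = ab y <-> N (x^-1 * y).
Proof.
split=> [/(congr1 sval) /= cxy|Nxy].
  have : coset y y by rewrite /coset /= gmulV; apply: gen_one.
  by rewrite -cxy.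
apply: eq_exist; apply/seteqP; split=> z; rewrite /coset /= => Nz.
  have -> : y^-1 * z = (x^-1 * y)^-1 * (x^-1 * z) by rewrite ginvM ginvK -gmulA gmulKV.
  exact: gen_mul (gen_inv Nxy) Nz.
by rewrite -(gmulKV y z) gmulA; apply: gen_mul Nxy Nz.
Qed.

Lemma ab_ind (P : abelianization -> Prop) : (forall x, P (ab x)) -> forall a, P a.
Proof.
move=> Pab [C Cex]; have [x Cx] := Cex.
by rewrite (_ : exist _ C Cex = ab x) //; apply: eq_exist.
Qed.

Lemma ab_surj (a : abelianization) : exists x, ab x = a.
Proof. by elim/ab_ind: a => x; exists x. Qed.

Definition ab_rep a := projT1 (cid (ab_surj a)).

Lemma ab_repK a : ab (ab_rep a) = a.
Proof. exact: projT2 (cid (ab_surj a)). Qed.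

Lemma ab_mul_compat x x' y y' : ab x = ab x' -> ab y = ab y' -> ab (x * y) = ab (x' * y').
Proof.
move=> /ab_eqP Nx /ab_eqP Ny; apply/ab_eqP.
have -> : (x * y)^-1 * (x' * y') = (y^-1 * ((x^-1 * x') * y)) * (y^-1 * y').
  by rewrite ginvM -!gmulA gmulKV.
by apply: gen_mul Ny; apply: commutator_subgroupJ.
Qed.

Lemma ab_inv_compat x x' : ab x = ab x' -> ab x^-1 = ab x'^-1.
Proof.
move=> /ab_eqP /gen_inv /(commutator_subgroupJ x^-1) Nx; apply/ab_eqP.
by move: Nx; rewrite !ginvM !ginvK -gmulA gmulV_r gmul1_r.
Qed.

Definition ab_add a b := ab (ab_rep a * ab_rep b).
Definition ab_opp a := ab (ab_rep a)^-1.

Lemma ab_addE x y : ab_add (ab x) (ab y) = ab (x * y).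
Proof. by apply: ab_mul_compat; apply: ab_repK. Qed.

Lemma ab_oppE x : ab_opp (ab x) = ab x^-1.
Proof. by apply: ab_inv_compat; apply: ab_repK. Qed.

Lemma ab_addA : associative ab_add.
Proof. by elim/ab_ind=> x; elim/ab_ind=> y; elim/ab_ind=> z; rewrite !ab_addE gmulA. Qed.

Lemma ab_addC : commutative ab_add.
Proof.
elim/ab_ind=> x; elim/ab_ind=> y; rewrite !ab_addE; apply/ab_eqP.
by rewrite ginvM; apply: gen_base; exists y, x.
Qed.

Lemma ab_add0 : left_id (ab 1) ab_add.
Proof. by elim/ab_ind=> x; rewrite ab_addE gmul1. Qed.

Lemma ab_addN : left_inverse (ab 1) ab_opp ab_add.
Proof. by elim/ab_ind=> x; rewrite ab_oppE ab_addE gmulV. Qed.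

HB.instance Definition _ := GRing.isZmodule.Build abelianization ab_addA ab_addC ab_add0 ab_addN.

Lemma abM x y : ab (x * y) = (ab x + ab y)%R.
Proof. by rewrite -ab_addE. Qed.

Lemma abV x : ab x^-1 = (- ab x)%R.
Proof. by rewrite -ab_oppE. Qed.

Lemma ab1 : ab 1 = 0%R.
Proof. by []. Qed.

Lemma ab_preimage_gsubgroup (S : set abelianization) :
  zsubgroup S -> gsubgroup [set x | S (ab x)].
Proof.
move=> zsubS; split=> [|x y|x] /=; first by rewrite ab1; apply: zsubgroup0.
  by rewrite abM; apply: zsubgroupD.
by rewrite abV; apply: zsubgroupN.
Qed.

Lemma spanl_lift (s : seq abelianization) a :
  spanl s a -> exists2 x, gen G (fun x => In x (map ab_rep s)) x & ab x = a.
Proof.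
elim=> [b sb||b c _ [x genx <-] _ [y geny <-]].
- by exists (ab_rep b); [apply/gen_base/in_map|apply: ab_repK].
- by exists 1; [apply: gen_one|apply: ab1].
- by exists (x * y^-1); [apply: gen_mul genx (gen_inv geny)|rewrite abM abV].
Qed.

Lemma abelianization_not_fg :
  ~ abelianization_finitely_generated G -> ~ fg_over [set 0%R] [set: abelianization].
Proof.
move=> notfg [s fgs]; apply: notfg; exists (map ab_rep s) => g.
have [_ -> [a sa]] := fgs (ab g) I; rewrite add0r => ag.
have [h genh ha] := spanl_lift sa; exists h; split=> //.
by apply/ab_eqP; rewrite ha.
Qed.

End Abelianization.

Theorem corollary2p8 (G : group) :
  SB_generated G -> abelianization_finitely_generated G.
Proof.
move=> SBG; apply: contrapT => notfg.
have [T [zsubT _ T_incr T_cover T_proper]] := not_fg_exhaustion (abelianization_not_fg notfg).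
have [n Tn] := SB_generated_chain_stationary (T := fun n x => T n (ab x))
  (fun n => ab_preimage_gsubgroup (zsubT n)) (fun n x => T_incr n (ab x))
  (fun x => T_cover (ab x) I) SBG.
by have [a _] := T_proper n; apply; rewrite -(ab_repK a); apply: Tn.
Qed.
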